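(* Let $V$ be a finite set of truth values and $\models_{\mathcal{D}_p,\mathcal{D}_c}$ a mixed consequence truth-relation on $V$ that is not pure ($\mathcal{D}_p\neq\mathcal{D}_c$), with constant expressive semantics. Then it admits regular connectives whose regularity rules are satisfied by no classical connective, and it also admits, for every classical connective, a regular connective sharing a regularity rule with it.
   Context: $V$ contains distinct $1,0$; sets of designated values $\mathcal{D}$ satisfy $1\in\mathcal{D}$, $0\notin\mathcal{D}$; $\gamma\models_{\mathcal{D}_p,\mathcal{D}_c}\delta$ iff ($\gamma\subseteq\mathcal{D}_p\Rightarrow\delta\cap\mathcal{D}_c\neq\emptyset$); pure means $\mathcal{D}_p=\mathcal{D}_c$. Semantics: valuations mapping atoms to $V$, connectives (of any arity, including $0$) interpreted by fixed truth functions, extended compositionally, every assignment to finitely many distinct atoms realized; constant expressive: every value is the constant value of some formula. $\Gamma\vdash\Delta$ iff $v(\Gamma)\models v(\Delta)$ for all $v$. An $n$-ary connective $C$ is regular with rule $(\mathcal{B}^p,\mathcal{B}^c)$, $\mathcal{B}^p,\mathcal{B}^c\subseteq\mathcal{P}(\{1..n\})^2$, if for all $\Gamma,\Delta,F_1..F_n$: $\Gamma\cup\{C(\vec F)\}\vdash\Delta$ iff for all $(B_p,B_c)\in\mathcal{B}^p$, $\Gamma\cup\{F_i:i\in B_p\}\vdash\{F_i:i\in B_c\}\cup\Delta$; $\Gamma\vdash\{C(\vec F)\}\cup\Delta$ iff the same for all $(B_p,B_c)\in\mathcal{B}^c$ (empty conjunction = true). Classical logic: $V=\{0,1\}$ with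 $\models_{\{1\},\{1\}}$; classical connectives: truth functions $\{0,1\}^n\to\{0,1\}$. Connectives share a regularity rule if some $(\mathcal{B}^p,\mathcal{B}^c)$ is satisfied by both. *)

From mathcomp Require Import all_boot.
Set Implicit Arguments. Unset Strict Implicit. Unset Printing Implicit Defensive.

Record sem (V : Type) := Sem {
  conn : Type;
  arity : conn -> nat;
  interp : forall c : conn, ('I_(arity c) -> V) -> V
}.

Inductive form (C : Type) (ar : C -> nat) : Type :=
| Atom : nat -> form ar
| App : forall c : C, ('I_(ar c) -> form ar) -> form ar.
Arguments Atom {C ar} n.
Arguments App {C ar} c args.

Definition formula V (S : sem V) := form (@arity V S).

Fixpoint eval V (S : sem V) (v : nat -> V) (phi : formula S) {struct phi} : V :=
  match phi with
  | Atom n => v n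
  | App c args => interp (fun i => eval v (args i))
  end.

Definition entails (V : finType) (S : sem V) (Dp Dc : {set V})
    (Gamma Delta : formula S -> Prop) : Prop :=
  forall v : nat -> V,
    (forall g, Gamma g -> eval v g \in Dp) ->
    exists d, Delta d /\ eval v d \in Dc.

Definition const_expressive V (S : sem V) : Prop :=
  forall x : V, exists phi : formula S, forall v, eval v phi = x.

(* A regularity rule (B^p, B^c) for an n-ary connective; indices are 'I_n
   (i.e. {0..n-1} standing for {1..n}). *)
Definition rule (n : nat) : Type :=
  ({set {set 'I_n} * {set 'I_n}} * {set {set 'I_n} * {set 'I_n}})%type.

Definition setU1f A (P : A -> Prop) (a : A) : A -> Prop := fun x => P x \/ x = a.
Definition setUp A (P Q : A -> Prop) : A -> Prop := fun x => P x \/ Q x.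
Definition img_idx A n (F : 'I_n -> A) (B : {set 'I_n}) : A -> Prop :=
  fun x => exists2 i, i \in B & x = F i.

Definition regular (V : finType) (S : sem V) (Dp Dc : {set V})
    (c : conn S) (R : rule (arity c)) : Prop :=
  forall (Gamma Delta : formula S -> Prop) (F : 'I_(arity c) -> formula S),
    (entails Dp Dc (setU1f Gamma (App c F)) Delta <->
      (forall B, B \in R.1 ->
        entails Dp Dc (setUp Gamma (img_idx F B.1)) (setUp (img_idx F B.2) Delta)))
    /\
    (entails Dp Dc Gamma (setU1f Delta (App c F)) <->
      (forall B, B \in R.2 ->
        entails Dp Dc (setUp Gamma (img_idx F B.1)) (setUp (img_idx F B.2) Delta))).

Definition ext_arity V (S : sem V) (n : nat) (o : option (conn S)) : nat :=
  match o with Some c => arity c | None => n end.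

Definition ext_interp V (S : sem V) (n : nat) (f : ('I_n -> V) -> V)
    (o : option (conn S)) : ('I_(@ext_arity V S n o) -> V) -> V :=
  match o as o0 return ('I_(@ext_arity V S n o0) -> V) -> V with
  | Some c => @interp V S c
  | None => f
  end.

Definition ext V (S : sem V) (n : nat) (f : ('I_n -> V) -> V) : sem V :=
  @Sem V (option (conn S)) (@ext_arity V S n) (@ext_interp V S n f).

(* Classical logic: V = {0,1} (bool), designated {1} on both sides, with every
   classical truth function available as a connective. *)
Definition classical_sem : sem bool :=
  @Sem bool {n : nat & ('I_n -> bool) -> bool} (fun c => projT1 c) (fun c => projT2 c).

Definition classical_sat (n : nat) (g : ('I_n -> bool) -> bool) (R : rule n) : Prop :=
  @regular bool classical_sem [set true] [set true]
    (existT (fun n => ('I_n -> bool) -> bool) n g) R.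

From mathcomp Require Import all_boot.
From Stdlib Require Import Classical FunctionalExtensionality.
Set Implicit Arguments. Unset Strict Implicit. Unset Printing Implicit Defensive.

(* A connective is regular with rule (B^p, B^c) as soon as its truth function
   is read off the rule: its value is in Dp iff the arguments satisfy some pair
   of B^p, and outside Dc iff they satisfy some pair of B^c.  Since Dp <> Dc,
   some value lies in Dp \ Dc or in Dc \ Dp; as a constant it is in Dp and
   outside Dc at once, or neither, which no classical constant is.  Conversely,
   the truth table of a classical g gives a rule whose four possible verdicts
   are realised by 1, 0, and an argument lying in Dp \ Dc or in Dc \ Dp. *)

Section Regularity.
Variables (V : finType) (Dp Dc : {set V}).

Definition sat_pair n (x : 'I_n -> V) (B : {set 'I_n} * {set 'I_n}) : bool :=
  [forall i in B.1, x i \in Dp] && [forall i in B.2, x i \notin Dc].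

Definition sat_some n (Bs : {set {set 'I_n} * {set 'I_n}}) (x : 'I_n -> V) : bool :=
  [exists B in Bs, sat_pair x B].

Variable S : sem V.

Definition countermodel (Gamma Delta : formula S -> Prop) (v : nat -> V) : Prop :=
  (forall g, Gamma g -> eval v g \in Dp) /\ (forall d, Delta d -> eval v d \notin Dc).

Lemma entailsP Gamma Delta :
  entails Dp Dc Gamma Delta <-> forall v, ~ countermodel Gamma Delta v.
Proof.
split=> [H v [HG HD] | H v HG].
- by have [d [/HD /negP]] := H v HG.
- apply: NNPP => Hn; apply: (H v); split=> // d Hd; apply/negP => Hc.
  by apply: Hn; exists d.
Qed.

Lemma countermodel_premise Gamma Delta phi v :
  countermodel (setU1f Gamma phi) Delta v <->
  countermodel Gamma Delta v /\ eval v phi \in Dp.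
Proof.
split=> [[HG HD] | [[HG HD] Hphi]].
- by split; [split=> // g Hg; apply: HG; left | apply: HG; right].
- by split=> // g [/HG | ->].
Qed.

Lemma countermodel_conclusion Gamma Delta phi v :
  countermodel Gamma (setU1f Delta phi) v <->
  countermodel Gamma Delta v /\ eval v phi \notin Dc.
Proof.
split=> [[HG HD] | [[HG HD] Hphi]].
- by split; [split=> // d Hd; apply: HD; left | apply: HD; right].
- by split=> // d [/HD | ->].
Qed.

Lemma countermodel_img Gamma Delta n (F : 'I_n -> formula S) B v :
  countermodel (setUp Gamma (img_idx F B.1)) (setUp (img_idx F B.2) Delta) v <->
  countermodel Gamma Delta v /\ sat_pair (fun i => eval v (F i)) B.
Proof.
split=> [[HG HD] | [[HG HD] /andP [/forall_inP H1 /forall_inP H2]]].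
- split; first by split=> [g Hg | d Hd]; [apply: HG; left | apply: HD; right].
  by apply/andP; split; apply/forall_inP => i Hi; [apply: HG; right | apply: HD; left];
    exists i.
- by split=> [g [/HG | [i /H1 Hi ->]] | d [[i /H2 Hi ->] | /HD]].
Qed.

Lemma entails_split Gamma Delta Gamma' Delta' n (F : 'I_n -> formula S) Bs :
  (forall v, countermodel Gamma' Delta' v <->
     countermodel Gamma Delta v /\ sat_some Bs (fun i => eval v (F i))) ->
  entails Dp Dc Gamma' Delta' <->
  (forall B, B \in Bs ->
     entails Dp Dc (setUp Gamma (img_idx F B.1)) (setUp (img_idx F B.2) Delta)).
Proof.
move=> Hcm; rewrite entailsP; split=> [H B HB | H v /Hcm [Hv /exists_inP [B HB HBv]]].
- apply/entailsP => v /countermodel_img [Hv HBv]; apply: (H v); apply/Hcm.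
  by split=> //; apply/exists_inP; exists B.
- by move/entailsP: (H B HB) => /(_ v); apply; apply/countermodel_img.
Qed.

Lemma regular_of_truth_table (c : conn S) (R : rule (arity c)) :
  (forall x, (interp x \in Dp) = sat_some R.1 x) ->
  (forall x, (interp x \notin Dc) = sat_some R.2 x) ->
  @regular V S Dp Dc c R.
Proof.
move=> HP HC Gamma Delta F; split; apply: entails_split => v.
- by apply: iff_trans (countermodel_premise _ _ _ _) _; rewrite /= HP.
- by apply: iff_trans (countermodel_conclusion _ _ _ _) _; rewrite /= HC.
Qed.

Lemma entails_premise_only (phi : formula S) :
  entails Dp Dc (setU1f (fun _ => False) phi) (fun _ => False) <->
  forall v, eval v phi \notin Dp.
Proof.
rewrite entailsP; split=> H v.
- apply/negP => Hv; apply: (H v); apply/countermodel_premise.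
  by split=> //; split=> [|].
- by case/countermodel_premise => _; apply/negP.
Qed.

Lemma entails_conclusion_only (phi : formula S) :
  entails Dp Dc (fun _ => False) (setU1f (fun _ => False) phi) <->
  forall v, eval v phi \in Dc.
Proof.
rewrite entailsP; split=> H v.
- apply/negPn/negP => Hv; apply: (H v); apply/countermodel_conclusion.
  by split=> //; split=> [|].
- by case/countermodel_conclusion => _; rewrite H.
Qed.

Lemma regular_nullary (x0 : V) (c : conn S) (R : rule (arity c))
    (F : 'I_(arity c) -> formula S) :
  arity c = 0 -> @regular V S Dp Dc c R ->
  ((forall v, eval v (App c F) \notin Dp) <-> R.1 = set0) /\
  ((forall v, eval v (App c F) \in Dc) <-> R.2 = set0).
Proof.
move=> c0 /(_ (fun _ => False) (fun _ => False) F) [HP HC].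
have no_pair B : ~ entails Dp Dc (setUp (fun _ => False) (img_idx F B.1))
                                 (setUp (img_idx F B.2) (fun _ => False)).
  move/entailsP/(_ (fun _ => x0)); apply; apply/countermodel_img.
  split; first by split=> [|].
  by apply/andP; split; apply/forall_inP => i; have := ltn_ord i; rewrite {2}c0.
have emptyE (Bs : {set {set 'I_(arity c)} * {set 'I_(arity c)}}) :
    (forall B, B \in Bs -> entails Dp Dc (setUp (fun _ => False) (img_idx F B.1))
                                         (setUp (img_idx F B.2) (fun _ => False))) <->
    Bs = set0.
  split=> [H | -> B]; last by rewrite inE.
  by apply/setP => B; rewrite inE; apply/negbTE/negP => /H /no_pair.
split.
- exact: iff_trans (iff_trans (iff_sym (entails_premise_only _)) HP) (emptyE _).
- exact: iff_trans (iff_trans (iff_sym (entails_conclusion_only _)) HC) (emptyE _).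
Qed.

End Regularity.

Definition table_pairs n (P : {set 'I_n} -> bool) : {set {set 'I_n} * {set 'I_n}} :=
  [set B | (B.2 == ~: B.1) && P B.1].

(* Row A of the table (arguments in A true, the others false) is the pair (A, ~: A). *)
Definition truth_table_rule n (g : ('I_n -> bool) -> bool) : rule n :=
  (table_pairs (fun A => g (fun i => i \in A)),
   table_pairs (fun A => ~~ g (fun i => i \in A))).

Definition const_pairs n (b : bool) : {set {set 'I_n} * {set 'I_n}} :=
  if b then [set (set0, set0)] else set0.

Definition const_rule n (b : bool) : rule n := (const_pairs n b, const_pairs n b).

Lemma sat_some_const_pairs (V : finType) (Dp Dc : {set V}) n b (x : 'I_n -> V) :
  sat_some Dp Dc (const_pairs n b) x = b.
Proof.
case: b; last by apply/exists_inP => -[B]; rewrite inE.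
apply/exists_inP; exists (set0, set0); first by rewrite inE.
by apply/andP; split; apply/forall_inP => i; rewrite inE.
Qed.

Lemma sat_pair_bool n (x : 'I_n -> bool) (A : {set 'I_n}) :
  sat_pair [set true] [set true] x (A, ~: A) = (A == [set i | x i]).
Proof.
apply/andP/eqP => [[/forall_inP H1 /forall_inP H2] | ->].
- apply/setP => i; rewrite inE; case: (boolP (i \in A)) => Hi.
  + by have := H1 i Hi; rewrite inE; case: (x i).
  + by have := H2 i; rewrite !inE Hi; case: (x i) => // /(_ isT).
- by split; apply/forall_inP => i; rewrite !inE //; case: (x i).
Qed.

Lemma sat_some_table_pairs_bool n (P : {set 'I_n} -> bool) (x : 'I_n -> bool) :
  sat_some [set true] [set true] (table_pairs P) x = P [set i | x i].
Proof.
apply/exists_inP/idP => [[[A A']] | HP].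
- by rewrite inE /= => /andP [/eqP -> HA]; rewrite sat_pair_bool => /eqP <-.
- by exists ([set i | x i], ~: [set i | x i]); rewrite ?inE /= ?eqxx ?sat_pair_bool.
Qed.

Lemma classical_sat_truth_table_rule n (g : ('I_n -> bool) -> bool) :
  classical_sat g (truth_table_rule g).
Proof.
have gE x : g (fun i => i \in [set i | x i]) = g x.
  by congr g; apply: functional_extensionality => i; rewrite inE.
by apply: regular_of_truth_table => x /=; rewrite sat_some_table_pairs_bool gE inE;
  case: (g x).
Qed.

Lemma classical_sat_nullary (g : ('I_0 -> bool) -> bool) (R : rule 0) :
  classical_sat g R -> (R.1 == set0) = (R.2 != set0).
Proof.
move=> /(regular_nullary (S := classical_sem) (c := existT _ 0 g) true
                          (fun _ => Atom 0) erefl) [HP HC].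
pose C : formula classical_sem := App (existT _ 0 g) (fun _ => Atom 0).
have evalE v : eval v C = g (fun _ => true).
  by congr g; apply: functional_extensionality => -[].
case Hg: (g _) evalE => evalE.
- have /HC -> : forall v, eval v C \in [set true] by move=> v; rewrite evalE inE.
  rewrite eqxx; apply/negbTE/eqP => /HP /(_ (fun _ => true)).
  by rewrite evalE inE.
- have /HP -> : forall v, eval v C \notin [set true] by move=> v; rewrite evalE inE.
  rewrite eqxx; apply/esym/eqP => /HC /(_ (fun _ => true)).
  by rewrite evalE inE.
Qed.

Lemma const_rule_not_classical (g : ('I_0 -> bool) -> bool) b :
  ~ classical_sat g (const_rule 0 b).
Proof. by move/classical_sat_nullary; case: (_ == _). Qed.

Section MixedValues.
Variables (V : finType) (Dp Dc : {set V}).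

Lemma mixed_witness : Dp != Dc -> exists w, (w \in Dp) = (w \notin Dc).
Proof.
move=> /eqP neq; case: (pickP (fun w => (w \in Dp) == (w \notin Dc))) => [w /eqP | H].
  by exists w.
by case: neq; apply/setP => w; have := H w; case: (w \in Dp); case: (w \in Dc).
Qed.

Lemma sat_table_pairs_both n (P : {set 'I_n} -> bool) (x : 'I_n -> V) :
  sat_some Dp Dc (table_pairs P) x ->
  sat_some Dp Dc (table_pairs (fun A => ~~ P A)) x ->
  exists i, (x i \in Dp) && (x i \notin Dc).
Proof.
move=> /exists_inP [[A A']]; rewrite inE /= => /andP [/eqP -> PA].
move=> /andP [/forall_inP HA /forall_inP HA'].
move=> /exists_inP [[B B']]; rewrite inE /= => /andP [/eqP -> PB].
move=> /andP [/forall_inP HB /forall_inP HB'].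
have : ~~ (A \subset B) || ~~ (B \subset A).
  by rewrite -negb_and -eqEsubset; apply/eqP => AB; move: PB; rewrite -AB PA.
case/orP => /subsetPn [i iin inot]; exists i; apply/andP; split.
- exact: HA.
- by apply: HB'; rewrite inE.
- exact: HB.
- by apply: HA'; rewrite inE.
Qed.

Lemma sat_table_pairs_neither n (P : {set 'I_n} -> bool) (x : 'I_n -> V) :
  ~~ sat_some Dp Dc (table_pairs P) x ->
  ~~ sat_some Dp Dc (table_pairs (fun A => ~~ P A)) x ->
  exists i, (x i \notin Dp) && (x i \in Dc).
Proof.
move=> noP noNP.
case: (boolP [exists i, (x i \notin Dp) && (x i \in Dc)]) => [/existsP // | /existsPn none].
pose A := [set i | x i \in Dp].
have satA : sat_pair Dp Dc x (A, ~: A).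
  apply/andP; split; apply/forall_inP => i; rewrite !inE // => iA.
  by have := none i; rewrite iA.
exfalso; case PA: (P A); [move/negP: noP | move/negP: noNP]; apply; apply/exists_inP;
  by exists (A, ~: A); rewrite // inE /= eqxx PA.
Qed.

Variables (one zero : V).
Hypotheses (hp1 : one \in Dp) (hc1 : one \in Dc) (hp0 : zero \notin Dp) (hc0 : zero \notin Dc).

Lemma value_of_status (p q : bool) :
  (p -> q -> exists w, (w \in Dp) && (w \notin Dc)) ->
  (~~ p -> ~~ q -> exists w, (w \notin Dp) && (w \in Dc)) ->
  exists w, ((w \in Dp) == p) && ((w \notin Dc) == q).
Proof.
case: p; case: q => /= both neither.
- by have [w /andP [Hp Hc]] := both isT isT; exists w; rewrite Hp Hc.
- by exists one; rewrite hp1 hc1.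
- by exists zero; rewrite (negbTE hp0) hc0.
- by have [w /andP [/negbTE Hp Hc]] := neither isT isT; exists w; rewrite Hp Hc.
Qed.

Definition choose_value (p q : bool) : V :=
  odflt one [pick w | ((w \in Dp) == p) && ((w \notin Dc) == q)].

Lemma choose_valueP p q :
  (exists w, ((w \in Dp) == p) && ((w \notin Dc) == q)) ->
  (choose_value p q \in Dp) = p /\ (choose_value p q \notin Dc) = q.
Proof.
move=> [w0 Hw0]; rewrite /choose_value.
by case: pickP => [w /andP [/eqP -> /eqP ->] | /(_ w0)] //; rewrite Hw0.
Qed.

Definition truth_table_interp n (g : ('I_n -> bool) -> bool) (x : 'I_n -> V) : V :=
  choose_value (sat_some Dp Dc (truth_table_rule g).1 x)
               (sat_some Dp Dc (truth_table_rule g).2 x).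

Lemma regular_truth_table_interp (S : sem V) n (g : ('I_n -> bool) -> bool) :
  @regular V (ext S (truth_table_interp g)) Dp Dc None (truth_table_rule g).
Proof.
have status x : exists w,
    ((w \in Dp) == sat_some Dp Dc (truth_table_rule g).1 x) &&
    ((w \notin Dc) == sat_some Dp Dc (truth_table_rule g).2 x).
  by apply: value_of_status => [/sat_table_pairs_both H /H [i] |
                                /sat_table_pairs_neither H /H [i]]; exists (x i).
apply: regular_of_truth_table => x; have [Hp Hc] := choose_valueP (status x).
- exact: Hp.
- exact: Hc.
Qed.

End MixedValues.

Theorem theorem6p3 (V : finType) (one zero : V) (Dp Dc : {set V}) (S : sem V)
  (h10 : one != zero)
  (hp1 : one \in Dp) (hc1 : one \in Dc)
  (hp0 : zero \notin Dp) (hc0 : zero \notin Dc)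
  (hmixed : Dp != Dc)
  (hce : const_expressive S) :
  (exists (n : nat) (f : ('I_n -> V) -> V) (R : rule n),
      @regular V (ext S f) Dp Dc None R /\
      forall g : ('I_n -> bool) -> bool, ~ classical_sat g R)
  /\
  (forall (n : nat) (g : ('I_n -> bool) -> bool),
      exists (f : ('I_n -> V) -> V) (R : rule n),
        @regular V (ext S f) Dp Dc None R /\ classical_sat g R).
Proof.
split.
- have [w Hw] := mixed_witness hmixed.
  exists 0, (fun _ => w), (const_rule 0 (w \in Dp)); split.
  + by apply: regular_of_truth_table => x /=; rewrite sat_some_const_pairs Hw.
  + move=> g; exact: const_rule_not_classical.
- move=> n g; exists (truth_table_interp Dp Dc one g), (truth_table_rule g); split.
  + exact: (regular_truth_table_interp hp1 hc1 hp0 hc0).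
  + exact: classical_sat_truth_table_rule.
Qed.
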